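(* There exists a non-empty open set $\mathcal{U}_1\subset(0,\infty)^5$ of parameter values $(A,r,\beta_0,a,\mu)$ such that, for every parameter value in $\mathcal{U}_1$, the system $$\dot S = S(A-S)-\beta_0 IS,\qquad \dot I=\beta_0 IS-\mu I-\frac{rI}{a+I}$$ satisfies $\mathcal{R}_0=\dfrac{\beta_0A}{\mu+\frac{r}{a}}<1$ and its flow has exactly two endemic equilibria, one of which is a sink and the other a saddle.
   Context: The system is an autonomous planar ODE in the variables $S$ (susceptible) and $I$ (infectious), considered on the closed quadrant $S,I\ge 0$, with positive parameters $A,r,\beta_0,a,\mu$; here $\mu$ denotes the total death rate of infectious individuals (natural death rate plus disease-induced death rate). The quantity $\mathcal{R}_0=\beta_0A/(\mu+r/a)$ is called the basic reproduction number. An endemic equilibrium is an equilibrium (zero of the vector field) with $I\neq 0$; the equilibria with $I=0$, namely $(0,0)$ and $(A,0)$, are the disease-free equilibria. A sink is an equilibrium whose Jacobian eigenvalues all have negative real part; a saddle is an equilibrium whose Jacobian has two real eigenvalues of opposite signs. *)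

From Stdlib Require Import Reals Lra.
From Coquelicot Require Import Coquelicot.
Open Scope R_scope.

(* Vector field of the SI model; parameters (A, r, b = beta_0, a, mu). *)
Definition fS (A r b a mu : R) (S I : R) : R := S * (A - S) - b * I * S.
Definition fI (A r b a mu : R) (S I : R) : R := b * I * S - mu * I - r * I / (a + I).

Definition basic_repro (A r b a mu : R) : R := b * A / (mu + r / a).

Definition is_equilibrium (A r b a mu : R) (S I : R) : Prop :=
  0 <= S /\ 0 <= I /\ fS A r b a mu S I = 0 /\ fI A r b a mu S I = 0.

Definition is_endemic_equilibrium (A r b a mu : R) (S I : R) : Prop :=
  is_equilibrium A r b a mu S I /\ I <> 0.

Definition J11 A r b a mu S I := Derive (fun s => fS A r b a mu s I) S.
Definition J12 A r b a mu S I := Derive (fun i => fS A r b a mu S i) I.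
Definition J21 A r b a mu S I := Derive (fun s => fI A r b a mu s I) S.
Definition J22 A r b a mu S I := Derive (fun i => fI A r b a mu S i) I.

Definition jac_eigenvalue A r b a mu S I (l : C) : Prop :=
  Cminus (Cmult (Cminus (RtoC (J11 A r b a mu S I)) l)
                (Cminus (RtoC (J22 A r b a mu S I)) l))
         (RtoC (J12 A r b a mu S I * J21 A r b a mu S I)) = RtoC 0.

Definition is_sink A r b a mu S I : Prop :=
  forall l : C, jac_eigenvalue A r b a mu S I l -> Re l < 0.

Definition is_saddle A r b a mu S I : Prop :=
  exists l1 l2 : R, l1 < 0 /\ 0 < l2 /\
    jac_eigenvalue A r b a mu S I (RtoC l1) /\
    jac_eigenvalue A r b a mu S I (RtoC l2).

Definition open5 (U : R -> R -> R -> R -> R -> Prop) : Prop :=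
  forall x1 x2 x3 x4 x5, U x1 x2 x3 x4 x5 ->
    exists eps, 0 < eps /\
      forall y1 y2 y3 y4 y5,
        Rabs (y1 - x1) < eps -> Rabs (y2 - x2) < eps -> Rabs (y3 - x3) < eps ->
        Rabs (y4 - x4) < eps -> Rabs (y5 - x5) < eps ->
        U y1 y2 y3 y4 y5.

From Stdlib Require Import Reals Lra Psatz.
From Coquelicot Require Import Coquelicot.
Open Scope R_scope.

(** Endemic equilibria lie on the line [S = A - b I], on which the [I]-equation
    becomes the quadratic [b^2 I^2 - p I + q = 0] with [p = b A - mu - b^2 a] and
    [q = r - (b A - mu) a]; and [R0 < 1] says exactly [q > 0].  If moreover [p > 0]
    and the discriminant is positive, there are two positive roots.  At an endemic
    equilibrium the Jacobian determinant is a positive multiple of the slope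
    [2 b^2 I - p] of the quadratic, hence positive at the larger root and negative
    at the smaller one (a saddle).  The trace is [- S + r I/(a+I)^2], and since
    [4 a I <= (a+I)^2] it is negative at both roots as soon as
    [b r < 4 a (mu + a b^2)].  These strict inequalities all hold on a small open
    box around [(A, r, b, a, mu) = (5, 5, 1, 1, 1)]. *)

Lemma open_ball_Rabs (P : R -> Prop) x :
  open P -> P x -> exists eps : posreal, forall y, Rabs (y - x) < eps -> P y.
Proof. intros HP Hx. exact (HP x Hx). Qed.

Lemma open5_prod (P1 P2 P3 P4 P5 : R -> Prop) :
  open P1 -> open P2 -> open P3 -> open P4 -> open P5 ->
  open5 (fun x1 x2 x3 x4 x5 => P1 x1 /\ P2 x2 /\ P3 x3 /\ P4 x4 /\ P5 x5).
Proof.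
intros O1 O2 O3 O4 O5 x1 x2 x3 x4 x5 (H1 & H2 & H3 & H4 & H5).
destruct (open_ball_Rabs _ _ O1 H1) as [e1 B1], (open_ball_Rabs _ _ O2 H2) as [e2 B2],
  (open_ball_Rabs _ _ O3 H3) as [e3 B3], (open_ball_Rabs _ _ O4 H4) as [e4 B4],
  (open_ball_Rabs _ _ O5 H5) as [e5 B5].
exists (Rmin e1 (Rmin e2 (Rmin e3 (Rmin e4 e5)))).
split; [repeat apply Rmin_glb_lt; apply cond_pos |].
intros y1 y2 y3 y4 y5 D1 D2 D3 D4 D5.
repeat split; [apply B1 | apply B2 | apply B3 | apply B4 | apply B5];
  repeat match goal with
  | D : Rmin _ _ > _ |- _ => apply Rmin_Rgt in D as [? ?]
  | D : _ < Rmin _ _ |- _ => apply Rmin_Rgt in D as [? ?] end;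
  assumption.
Qed.

Lemma J11_eq A r b a mu S I : J11 A r b a mu S I = A - 2*S - b*I.
Proof. unfold J11, fS. apply is_derive_unique. auto_derive; [auto | ring]. Qed.

Lemma J12_eq A r b a mu S I : J12 A r b a mu S I = - b*S.
Proof. unfold J12, fS. apply is_derive_unique. auto_derive; [auto | ring]. Qed.

Lemma J21_eq A r b a mu S I : J21 A r b a mu S I = b*I.
Proof. unfold J21, fI. apply is_derive_unique. auto_derive; [auto | ring]. Qed.

Lemma J22_eq A r b a mu S I :
  a + I <> 0 -> J22 A r b a mu S I = b*S - mu - r*a/((a+I)*(a+I)).
Proof. intros H. unfold J22, fI. apply is_derive_unique. auto_derive; [auto | field; auto]. Qed.

Lemma quadratic_eq_0_iff k p q s x :
  k <> 0 -> s*s = p*p - 4*k*q ->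
  k*x*x - p*x + q = 0 <-> x = (p + s)/(2*k) \/ x = (p - s)/(2*k).
Proof.
intros Hk Hs.
assert (Hfactor : (2*k*x - p - s)*(2*k*x - p + s) = 4*k*(k*x*x - p*x + q))
  by (transitivity ((2*k*x - p)*(2*k*x - p) - s*s); [ring | rewrite Hs; ring]).
split.
- intros H. rewrite H, Rmult_0_r in Hfactor.
  destruct (Rmult_integral _ _ Hfactor) as [E|E]; [left|right];
    field_simplify_eq; lra.
- intros Hx. apply (Rmult_eq_reg_l (4*k)); [|lra]. rewrite <- Hfactor, Rmult_0_r.
  destruct Hx as [-> | ->]; field; auto.
Qed.

Definition char_root (j11 j12 j21 j22 : R) (l : C) : Prop :=
  Cminus (Cmult (Cminus (RtoC j11) l) (Cminus (RtoC j22) l)) (RtoC (j12 * j21)) = RtoC 0.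

Lemma char_root_components j11 j12 j21 j22 x y :
  char_root j11 j12 j21 j22 (x, y) <->
  x*x - y*y - (j11 + j22)*x + (j11*j22 - j12*j21) = 0 /\ y*(j11 + j22 - 2*x) = 0.
Proof.
unfold char_root, Cminus, Cmult, Cplus, Copp, RtoC; simpl.
split.
- intros H. injection H as Hre Him. split; lra.
- intros [Hre Him]. f_equal; lra.
Qed.

Lemma char_root_Re_lt0 j11 j12 j21 j22 (l : C) :
  j11 + j22 < 0 -> 0 < j11*j22 - j12*j21 -> char_root j11 j12 j21 j22 l -> Re l < 0.
Proof.
destruct l as [x y]. intros Htr Hdet [Hre Him]%char_root_components. simpl.
destruct (Req_dec y 0) as [-> | Hy].
- destruct (Rlt_or_le x 0) as [Hx | Hx]; [exact Hx | nra].
- apply Rmult_integral in Him as [Him | Him]; lra.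
Qed.

Lemma char_roots_of_det_lt0 j11 j12 j21 j22 :
  j11*j22 - j12*j21 < 0 ->
  exists l1 l2 : R, l1 < 0 /\ 0 < l2 /\
    char_root j11 j12 j21 j22 (RtoC l1) /\ char_root j11 j12 j21 j22 (RtoC l2).
Proof.
set (T := j11 + j22). set (D := j11*j22 - j12*j21). intros HD.
set (s := sqrt (T*T - 4*1*D)).
assert (Hs : s*s = T*T - 4*1*D) by (apply sqrt_sqrt; nra).
assert (Hs0 : 0 <= s) by apply sqrt_pos.
assert (HT : - s < T < s) by (split; nra).
assert (Hroot : forall l, l = (T + s)/(2*1) \/ l = (T - s)/(2*1) ->
          char_root j11 j12 j21 j22 (RtoC l)).
{ intros l Hl%(quadratic_eq_0_iff 1 T D s l R1_neq_R0 Hs).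
  apply char_root_components. unfold T, D in *. split; lra. }
exists ((T - s)/(2*1)), ((T + s)/(2*1)).
repeat split; try apply Hroot; auto; lra.
Qed.

Lemma basic_repro_lt1_iff A r b a mu :
  0 < r -> 0 < a -> 0 < mu -> basic_repro A r b a mu < 1 <-> (b*A - mu)*a < r.
Proof.
intros Hr Ha Hmu. unfold basic_repro.
assert (Hden : 0 < mu*a + r) by nra.
replace (b*A/(mu + r/a)) with (b*A*a/(mu*a + r)) by (field; lra).
rewrite Rlt_div_l by exact Hden.
lra.
Qed.

Lemma endemic_equilibrium_iff A r b a mu S I :
  0 < r -> 0 < b -> 0 < a -> 0 < mu ->
  is_endemic_equilibrium A r b a mu S I <->
  0 < I /\ S = A - b*I /\ (b*S - mu)*(a + I) = r.
Proof.
intros Hr Hb Ha Hmu. unfold is_endemic_equilibrium, is_equilibrium, fS, fI.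
split.
- intros [(HS & HI & HfS & HfI) HI0].
  assert (HIpos : 0 < I) by lra.
  assert (Hbal : (b*S - mu)*(a + I) = r).
  { apply (Rmult_eq_reg_l I); [|lra].
    transitivity (r*I + (b*I*S - mu*I - r*I/(a + I))*(a + I)); [field; lra|].
    rewrite HfI. ring. }
  split; [exact HIpos | split; [|exact Hbal]].
  assert (HS' : S*(A - S - b*I) = 0) by (rewrite <- HfS; ring).
  apply Rmult_integral in HS' as [-> | HS']; [|lra].
  assert (Hneg : (b*0 - mu)*(a + I) < 0) by nra.
  lra.
- intros (HI & -> & Hbal).
  assert (HSpos : 0 < A - b*I).
  { assert (0 < b*(A - b*I) - mu) by nra. nra. }
  repeat split; try lra.
  rewrite <- Hbal. field. lra.
Qed.

Lemma jacobian_at_endemic A r b a mu S I :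
  0 < a -> 0 < I -> S = A - b*I -> (b*S - mu)*(a + I) = r ->
  J11 A r b a mu S I + J22 A r b a mu S I = - S + r*I/((a + I)*(a + I)) /\
  J11 A r b a mu S I * J22 A r b a mu S I - J12 A r b a mu S I * J21 A r b a mu S I
  = S*I*(2*(b*b)*I - (b*A - mu - b*b*a))/(a + I).
Proof.
intros Ha HI HS Hbal.
rewrite J11_eq, J12_eq, J21_eq, J22_eq by lra.
subst r S. split; field; lra.
Qed.

Definition exactly_two_endemic_sink_saddle (A r b a mu : R) : Prop :=
  exists S1 I1 S2 I2 : R,
    (S1, I1) <> (S2, I2) /\
    is_endemic_equilibrium A r b a mu S1 I1 /\
    is_endemic_equilibrium A r b a mu S2 I2 /\
    (forall S I, is_endemic_equilibrium A r b a mu S I ->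
       (S, I) = (S1, I1) \/ (S, I) = (S2, I2)) /\
    is_sink A r b a mu S1 I1 /\
    is_saddle A r b a mu S2 I2.

Section Bistability.

Variables A r b a mu : R.
Hypotheses (Hr : 0 < r) (Hb : 0 < b) (Ha : 0 < a) (Hmu : 0 < mu).

Local Notation p := (b*A - mu - b*b*a).
Local Notation q := (r - (b*A - mu)*a).

Hypothesis Hq : 0 < q.
Hypothesis Hp : 0 < p.
Hypothesis Hdisc : 4*(b*b)*q < p*p.
Hypothesis Htrace : b*r < 4*a*(mu + a*(b*b)).

Let s := sqrt (p*p - 4*(b*b)*q).
Let I_sink := (p + s)/(2*(b*b)).
Let I_saddle := (p - s)/(2*(b*b)).

Lemma sqrt_disc_bounds : 0 < s < p.
Proof.
assert (Hkq : 0 < 4*(b*b)*q) by (apply Rmult_lt_0_compat; nra).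
split; [apply sqrt_lt_R0; lra |].
rewrite <- (sqrt_square p) by lra.
apply sqrt_lt_1_alt; lra.
Qed.

Lemma I_saddle_lt_I_sink : I_saddle < I_sink.
Proof.
pose proof sqrt_disc_bounds.
apply Rmult_lt_compat_r; [apply Rinv_0_lt_compat; nra | lra].
Qed.

Lemma endemic_I_bounds I : I = I_sink \/ I = I_saddle -> 0 < I /\ b*b*I < p.
Proof.
pose proof sqrt_disc_bounds as Hs.
assert (Hb2 : 0 < b*b) by nra.
intros [-> | ->]; (split; [apply Rdiv_lt_0_compat; lra |]);
  [replace (b*b*I_sink) with ((p + s)/2) | replace (b*b*I_saddle) with ((p - s)/2)];
  unfold I_sink, I_saddle; try field; lra.
Qed.

Lemma endemic_equilibrium_roots S I :
  is_endemic_equilibrium A r b a mu S I <-> S = A - b*I /\ (I = I_sink \/ I = I_saddle).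
Proof.
assert (Hs : s*s = p*p - 4*(b*b)*q) by (apply sqrt_sqrt; lra).
assert (Hb2 : b*b <> 0) by nra.
rewrite endemic_equilibrium_iff by assumption.
split.
- intros (HI & -> & Hbal). split; [reflexivity |].
  apply (quadratic_eq_0_iff _ _ _ _ _ Hb2 Hs). lra.
- intros [-> Hroot]. split; [now apply endemic_I_bounds | split; [reflexivity |]].
  apply (quadratic_eq_0_iff _ _ _ _ _ Hb2 Hs) in Hroot. lra.
Qed.

Lemma balance_at_root I :
  I = I_sink \/ I = I_saddle -> (b*(A - b*I) - mu)*(a + I) = r.
Proof.
intros Hroot.
assert (HE : is_endemic_equilibrium A r b a mu (A - b*I) I)
  by (apply endemic_equilibrium_roots; auto).
now apply endemic_equilibrium_iff in HE as (_ & _ & Hbal).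
Qed.

Lemma trace_lt0_at_root I : I = I_sink \/ I = I_saddle ->
  J11 A r b a mu (A - b*I) I + J22 A r b a mu (A - b*I) I < 0.
Proof.
intros Hroot.
destruct (endemic_I_bounds I Hroot) as [HI HbI].
pose proof (balance_at_root I Hroot) as Hbal.
rewrite (proj1 (jacobian_at_endemic A r b a mu (A - b*I) I Ha HI eq_refl Hbal)).
set (S := A - b*I) in *.
assert (HbS : mu + a*(b*b) < b*S) by (unfold S; lra).
assert (HS : 0 < S) by nra.
assert (H4aS : r < 4*a*S).
{ apply (Rmult_lt_reg_l b); [exact Hb |].
  apply (Rlt_trans _ (4*a*(mu + a*(b*b)))); [exact Htrace | nra]. }
assert (Hamgm : 4*a*I <= (a + I)*(a + I))
  by (pose proof (Rle_0_sqr (a - I)); unfold Rsqr in *; lra).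
assert (r*I/((a + I)*(a + I)) < S); [|lra].
apply Rlt_div_l; [nra |].
apply (Rlt_le_trans _ (4*a*S*I)); nra.
Qed.

Lemma det_sign_at_root I : I = I_sink \/ I = I_saddle ->
  exists c, 0 < c /\
    J11 A r b a mu (A - b*I) I * J22 A r b a mu (A - b*I) I
    - J12 A r b a mu (A - b*I) I * J21 A r b a mu (A - b*I) I = c*(2*(b*b)*I - p).
Proof.
intros Hroot.
destruct (endemic_I_bounds I Hroot) as [HI HbI].
pose proof (balance_at_root I Hroot) as Hbal.
rewrite (proj2 (jacobian_at_endemic A r b a mu (A - b*I) I Ha HI eq_refl Hbal)).
assert (HS : 0 < A - b*I) by nra.
exists ((A - b*I)*I/(a + I)). split.
- apply Rdiv_lt_0_compat; nra.
- field. lra.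
Qed.

Lemma sink_at_I_sink : is_sink A r b a mu (A - b*I_sink) I_sink.
Proof.
intros l Hl.
destruct (det_sign_at_root I_sink (or_introl eq_refl)) as (c & Hc & Hdet).
assert (Hslope : 2*(b*b)*I_sink - p = s) by (unfold I_sink; field; nra).
eapply char_root_Re_lt0; [| | exact Hl].
- exact (trace_lt0_at_root I_sink (or_introl eq_refl)).
- rewrite Hdet, Hslope. apply Rmult_lt_0_compat; [exact Hc | apply sqrt_disc_bounds].
Qed.

Lemma saddle_at_I_saddle : is_saddle A r b a mu (A - b*I_saddle) I_saddle.
Proof.
destruct (det_sign_at_root I_saddle (or_intror eq_refl)) as (c & Hc & Hdet).
assert (Hslope : 2*(b*b)*I_saddle - p = - s) by (unfold I_saddle; field; nra).
apply char_roots_of_det_lt0.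
rewrite Hdet, Hslope. pose proof sqrt_disc_bounds. nra.
Qed.

Theorem endemic_sink_saddle :
  basic_repro A r b a mu < 1 /\ exactly_two_endemic_sink_saddle A r b a mu.
Proof.
split; [apply basic_repro_lt1_iff; lra |].
exists (A - b*I_sink), I_sink, (A - b*I_saddle), I_saddle.
split; [| split; [| split; [| split; [| split]]]].
- intros [= _ Heq]. pose proof I_saddle_lt_I_sink. lra.
- apply endemic_equilibrium_roots; auto.
- apply endemic_equilibrium_roots; auto.
- intros S I [-> [-> | ->]]%endemic_equilibrium_roots; auto.
- apply sink_at_I_sink.
- apply saddle_at_I_saddle.
Qed.

End Bistability.

Definition close_to (c x : R) : Prop := c - 0.01 < x < c + 0.01.

Definition param_box (A r b a mu : R) : Prop :=
  close_to 5 A /\ close_to 5 r /\ close_to 1 b /\ close_to 1 a /\ close_to 1 mu.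

Lemma open_close_to c : open (close_to c).
Proof. apply open_and; [apply open_gt | apply open_lt]. Qed.

Lemma param_box_conditions A r b a mu : param_box A r b a mu ->
  0 < r - (b*A - mu)*a /\ 0 < b*A - mu - b*b*a /\
  4*(b*b)*(r - (b*A - mu)*a) < (b*A - mu - b*b*a)*(b*A - mu - b*b*a) /\
  b*r < 4*a*(mu + a*(b*b)).
Proof.
unfold param_box, close_to. intros (hA & hr & hb & ha & hm).
assert (hbA : 4.94 < b*A < 5.061) by nra.
assert (hb2 : 0.98 < b*b < 1.021) by nra.
assert (hq : 0.7 < r - (b*A - mu)*a < 1.3) by nra.
repeat split; nra.
Qed.

Theorem theoremA :
  exists U : R -> R -> R -> R -> R -> Prop,
    open5 U /\
    (exists A r b a mu, U A r b a mu) /\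
    (forall A r b a mu, U A r b a mu ->
       0 < A /\ 0 < r /\ 0 < b /\ 0 < a /\ 0 < mu) /\
    (forall A r b a mu, U A r b a mu ->
       basic_repro A r b a mu < 1 /\
       exists S1 I1 S2 I2 : R,
         (S1, I1) <> (S2, I2) /\
         is_endemic_equilibrium A r b a mu S1 I1 /\
         is_endemic_equilibrium A r b a mu S2 I2 /\
         (forall S I, is_endemic_equilibrium A r b a mu S I ->
            (S, I) = (S1, I1) \/ (S, I) = (S2, I2)) /\
         is_sink A r b a mu S1 I1 /\
         is_saddle A r b a mu S2 I2).
Proof.
exists param_box. split; [| split; [| split]].
- apply open5_prod; apply open_close_to.
- exists 5, 5, 1, 1, 1. unfold param_box, close_to. lra.
- unfold param_box, close_to. intros A r b a mu H. lra.
- intros A r b a mu H.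
  destruct (param_box_conditions A r b a mu H) as (Hq & Hp & Hdisc & Htrace).
  unfold param_box, close_to in H.
  apply endemic_sink_saddle; lra.
Qed.
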